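(* There is a universal constant $C$ such that for every Borel set $A\subset[0,1]$ (with Lebesgue measure $|A|$): \[ \|G_{\mathbf{k}}\|_{L^1(A\times A)}\leq C\,\frac{|A|}{|\mathbf{k}|}\min\Big\{|A|,\frac{1}{|\mathbf{k}|}\Big\}\quad\text{for all }\mathbf{k}\neq\mathbf 0, \] and \[ \|G_{\mathbf{0}}\|_{L^1(A\times A)}\leq C\,|A|^2\,\frac{1}{|A|}\int_A\min\{z,1-z\}\,dz . \]
   Context: For $\mathbf{k}\in\mathbb{R}^2\setminus\{\mathbf 0\}$ and $z,z'\in[0,1]$, $G_{\mathbf{k}}(z,z')=\frac{\mathrm{csch}(|\mathbf{k}|)}{|\mathbf{k}|}\sinh(|\mathbf{k}|z)\sinh(|\mathbf{k}|(1-z'))$ if $z\le z'$ and $\frac{\mathrm{csch}(|\mathbf{k}|)}{|\mathbf{k}|}\sinh(|\mathbf{k}|z')\sinh(|\mathbf{k}|(1-z))$ if $z\ge z'$; $G_{\mathbf 0}(z,z')=z(1-z')$ if $z\le z'$ and $z'(1-z)$ if $z\ge z'$. These are the Green's functions of $-\frac{d^2}{dz^2}+|\mathbf{k}|^2$ on $[0,1]$ with zero Dirichlet conditions. *)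

From mathcomp Require Import all_boot all_order all_algebra.
From mathcomp Require Import all_classical all_reals all_analysis.
Set Implicit Arguments. Unset Strict Implicit. Unset Printing Implicit Defensive.
Import Order.TTheory GRing.Theory Num.Theory.
Local Open Scope ring_scope.

Definition sinh {R : realType} (x : R) : R := (expR x - expR (- x)) / 2.

Definition knorm {R : realType} (k : R * R) : R := Num.sqrt (k.1 ^+ 2 + k.2 ^+ 2).

(* Green's function G_k(z,z') of -d^2/dz^2 + |k|^2 on [0,1], Dirichlet b.c. *)
Definition Gk {R : realType} (k : R * R) (z z' : R) : R :=
  let a := knorm k in
  if k == (0, 0) then
    (if z <= z' then z * (1 - z') else z' * (1 - z))
  else
    (if z <= z' then (sinh a)^-1 / a * sinh (a * z) * sinh (a * (1 - z'))
     else (sinh a)^-1 / a * sinh (a * z') * sinh (a * (1 - z))).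

From mathcomp Require Import all_boot all_order all_algebra.
From mathcomp Require Import all_classical all_reals all_analysis.
From mathcomp Require Import ring lra measurable_realfun.
Set Implicit Arguments. Unset Strict Implicit. Unset Printing Implicit Defensive.
Import Order.TTheory GRing.Theory Num.Theory.
Import numFieldNormedType.Exports.
Local Open Scope classical_set_scope.
Local Open Scope ring_scope.

(* Write K = |k| for k <> 0.  For z <= z' the inequality
   2 sinh (K z) sinh (K (1 - z')) e^(K (z' - z)) <= sinh K
   gives 0 <= G_k(z, z') <= e^(-K |z - z'|) / (2 K).  Integrated over z' in A
   this is at most |A| / (2 K), and also at most 4 / K^2, since e^(-K |z - z'|)
   is dominated by a geometric staircase of indicators of balls of radius
   (n + 1) / K.  Tonelli then bounds the double integral by |A| times the
   smaller of these.  For k = 0 one has G_0(z, z') <= min(z, 1 - z) and the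
   same argument applies. *)

Section sinh.
Context {R : realType}.
Implicit Types x y d : R.

Lemma sinh_ge0 x : 0 <= x -> 0 <= sinh x.
Proof. by move=> x0; rewrite /sinh divr_ge0// subr_ge0 ler_expR; lra. Qed.

Lemma sinh_gt0 x : 0 < x -> 0 < sinh x.
Proof. by move=> x0; rewrite /sinh divr_gt0// subr_gt0 ltr_expR; lra. Qed.

Lemma sinh_mul_expR_le x y d : 0 <= x -> 0 <= y -> 0 <= d ->
  2 * sinh x * sinh y * expR d <= sinh (x + y + d).
Proof.
move=> x0 y0 d0.
have amgm : 2 <= expR (x - y) + expR (y - x).
  by have := expR_ge1Dx (x - y); have := expR_ge1Dx (y - x); lra.
have le1 : expR (d - x - y) <= expR d by rewrite ler_expR; lra.
have le2 : expR (- (x + y + d)) <= expR d by rewrite ler_expR; lra.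
have ed0 := expR_gt0 d.
rewrite -subr_ge0.
have -> : sinh (x + y + d) - 2 * sinh x * sinh y * expR d =
    (expR d * (expR (x - y) + expR (y - x)) - expR (d - x - y)
     - expR (- (x + y + d))) / 2.
  rewrite /sinh !expRN !expRD !expRN.
  by field; rewrite ?gt_eqF ?expR_gt0.
by rewrite divr_ge0//; nra.
Qed.

End sinh.

Section green.
Context {R : realType}.
Implicit Types (K z : R) (k : R * R).

Definition green_sinh K z z' : R :=
  (sinh K)^-1 / K * sinh (K * z) * sinh (K * (1 - z')).

Lemma green_sinh_ge0 K z z' : 0 < K -> 0 <= z -> z' <= 1 ->
  0 <= green_sinh K z z'.
Proof.
move=> K0 z0 z'1; rewrite /green_sinh.
have sx0 : 0 <= sinh (K * z) by apply: sinh_ge0; nra.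
have sy0 : 0 <= sinh (K * (1 - z')) by apply: sinh_ge0; nra.
have S0 : 0 <= (sinh K)^-1 by rewrite invr_ge0 ltW// sinh_gt0.
by do 3 apply: mulr_ge0 => //; rewrite invr_ge0 ltW.
Qed.

(* [sinh_mul_expR_le] with [x, y, d] the lengths of [0, z], [z', 1], [z, z']. *)
Lemma green_sinh_le_expR K z z' : 0 < K -> 0 <= z -> z <= z' -> z' <= 1 ->
  green_sinh K z z' <= expR (- (K * (z' - z))) / (2 * K).
Proof.
move=> K0 z0 zz' z'1; rewrite /green_sinh expRN.
have S0 : 0 < sinh K by apply: sinh_gt0.
have E0 := expR_gt0 (K * (z' - z)).
have key := @sinh_mul_expR_le _ (K * z) (K * (1 - z')) (K * (z' - z)).
rewrite (_ : K * z + K * (1 - z') + K * (z' - z) = K) in key; last by ring.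
have {}key : 2 * sinh (K * z) * sinh (K * (1 - z')) <= sinh K / expR (K * (z' - z)).
  by rewrite ler_pdivlMr //; apply: key; nra.
have c0 : 0 <= (sinh K)^-1 / (2 * K) by rewrite divr_ge0 ?invr_ge0 ?ltW// mulr_gt0.
have := ler_wpM2r c0 key.
have -> : 2 * sinh (K * z) * sinh (K * (1 - z')) * ((sinh K)^-1 / (2 * K)) =
    (sinh K)^-1 / K * sinh (K * z) * sinh (K * (1 - z')).
  by field; rewrite ?gt_eqF.
suff -> : sinh K / expR (K * (z' - z)) * ((sinh K)^-1 / (2 * K)) =
    (expR (K * (z' - z)))^-1 / (2 * K) by [].
by field; rewrite ?gt_eqF.
Qed.

Lemma knorm_gt0 k : k != (0, 0) -> 0 < knorm k.
Proof.
case: k => a b; rewrite xpair_eqE negb_and /knorm /= sqrtr_gt0 => h.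
have a2 := sqr_ge0 a; have b2 := sqr_ge0 b.
by case/orP: h; rewrite neq_lt => /orP[] h; nra.
Qed.

Lemma GkE k z z' : k != (0, 0) ->
  Gk k z z' = if z <= z' then green_sinh (knorm k) z z'
              else green_sinh (knorm k) z' z.
Proof. by move=> hk; rewrite /Gk (negbTE hk). Qed.

Lemma Gk_ge0 k z z' : 0 <= z <= 1 -> 0 <= z' <= 1 -> 0 <= Gk k z z'.
Proof.
move=> /andP[z0 z1] /andP[z'0 z'1].
have [->|hk] := eqVneq k (0, 0).
  by rewrite /Gk eqxx; case: ifP => _; nra.
have K0 := knorm_gt0 hk.
by rewrite GkE //; case: ifP => _; apply: green_sinh_ge0.
Qed.

Lemma Gk_le_expR k z z' : k != (0, 0) -> 0 <= z <= 1 -> 0 <= z' <= 1 ->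
  Gk k z z' <= expR (- (knorm k * `|z - z'|)) / (2 * knorm k).
Proof.
move=> hk /andP[z0 z1] /andP[z'0 z'1]; have K0 := knorm_gt0 hk.
rewrite GkE //; have [zz'|zz'] := lerP z z'.
  exact: green_sinh_le_expR.
by apply: green_sinh_le_expR => //; apply: ltW.
Qed.

Lemma Gk0_le_min z z' : 0 <= z <= 1 -> 0 <= z' <= 1 ->
  Gk (0, 0) z z' <= Num.min z (1 - z).
Proof.
move=> /andP[z0 z1] /andP[z'0 z'1].
rewrite /Gk eqxx le_min.
by have [zz'|/ltW zz'] := lerP z z'; apply/andP; split; nra.
Qed.

End green.

Section staircase.
Context {R : realType}.
Local Notation T := (measurableTypeR R).
Local Notation mu := (@lebesgue_measure R).
Implicit Types (K x y : R) (N : nat).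

(* A step majorant of [y |-> expR (- K * |x - y|)] (see [expR_le_staircase])
   whose integral over any set is [O(1/K)], with no exponential to integrate. *)
Definition staircase (K : R) (N : nat) (x y : R) : R :=
  \sum_(n < N) 2^-1 ^+ n * (\1_(ball x (n.+1%:R / K)) y : R).

Lemma staircase_ge0 K N x y : 0 <= staircase K N x y.
Proof.
apply: sumr_ge0 => n _; apply: mulr_ge0; first exact: exprn_ge0.
by rewrite indicE ler0n.
Qed.

Lemma pow2_le_expR n : 2 ^+ n <= expR n%:R :> R.
Proof.
elim: n => [|n IH]; first by rewrite expr0 expR0.
have e2 : 2 <= expR 1 :> R by have := expR_ge1Dx (1 : R); rewrite -[1 + 1]/2%:R.
rewrite exprS -[n.+1]addn1 natrD expRD mulrC.
by apply: ler_pM => //; apply: exprn_ge0.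
Qed.

Lemma expR_le_staircase K N x y : 0 < K -> K * `|x - y| < N%:R ->
  expR (- (K * `|x - y|)) <= staircase K N x y.
Proof.
move=> K0 KdN; set d := `|x - y|.
have Kd0 : 0 <= K * d := mulr_ge0 (ltW K0) (normr_ge0 _).
set n := Num.truncn (K * d).
have nN : (n < N)%N by rewrite Num.Theory.truncn_lt_nat.
rewrite /staircase (bigD1 (Ordinal nN)) //=.
rewrite indicE mem_set; last first.
  by rewrite -ball_normE /ball_ /= -/d ltr_pdivlMr // mulrC Num.Theory.truncnS_gt.
rewrite mulr1 -[expR _]addr0; apply: lerD; last first.
  apply: sumr_ge0 => i _; apply: mulr_ge0; first exact: exprn_ge0.
  by rewrite indicE ler0n.
apply: (@le_trans _ _ (expR (- n%:R))).
  by rewrite ler_expR lerN2 Num.Theory.truncn_le.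
rewrite expRN exprVn lef_pV2 ?posrE ?expR_gt0 ?exprn_gt0 //.
exact: pow2_le_expR.
Qed.

Lemma sum_succ_mul_halfpow_le N : \sum_(n < N) n.+1%:R * 2^-1 ^+ n <= 4 :> R.
Proof.
suff -> : \sum_(n < N) n.+1%:R * 2^-1 ^+ n = 4 - 2 * N.+2%:R * 2^-1 ^+ N :> R.
  by rewrite lerBlDr lerDl !mulr_ge0 ?exprn_ge0.
elim: N => [|N IH]; first by rewrite big_ord0 expr0 mulr1; ring.
by rewrite big_ord_recr /= IH exprS !mulrS; field.
Qed.

Lemma measurable_staircase K N x :
  measurable_fun [set: T] (fun y : T => staircase K N x y).
Proof.
apply: measurable_sum => n; apply: measurable_funM => //.
by apply: measurable_indic; apply: measurable_ball.
Qed.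

(* Rung [n] has height [2^-n] and width [2 (n + 1) / K]. *)
Lemma integral_staircase_le (A : set T) K N x : measurable A -> 0 < K ->
  (\int[mu]_(y in A) (staircase K N x y)%:E <= (8 / K)%:E)%E.
Proof.
move=> mA K0.
under eq_integral do rewrite -sumEFin.
have mrung (n : 'I_N) : measurable_fun A
    (fun y : T => (2^-1 ^+ n * (\1_(ball x (n.+1%:R / K)) y : R))%:E).
  apply/measurable_EFinP; apply: measurable_funM => //.
  by apply: measurable_indic; apply: measurable_ball.
have rung0 (n : 'I_N) y : A y ->
    (0 <= (2^-1 ^+ n * (\1_(ball x (n.+1%:R / K)) y : R))%:E)%E.
  by move=> _; rewrite lee_fin mulr_ge0 ?exprn_ge0 // indicE ler0n.
rewrite (ge0_integral_sum _ mA mrung rung0).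
apply: (@le_trans _ _ (\sum_(n < N) (2^-1 ^+ n * (n.+1%:R / K *+ 2))%:E)%E).
  apply: lee_sum => n _.
  have hn0 : 0 <= (2^-1 : R) ^+ n by exact: exprn_ge0.
  rewrite (integralZl_indic mA (fun _ => ball x (n.+1%:R / K))); first last.
  - exact: measurable_ball.
  - by rewrite ltNge hn0.
  rewrite integral_indic //; last exact: measurable_ball.
  rewrite EFinM; apply: lee_wpmul2l; first by rewrite lee_fin.
  rewrite -(@lebesgue_measure_ball R x); last by rewrite divr_ge0 // ltW.
  apply: le_measure; last exact: subIsetl.
  - by rewrite inE; apply: measurableI => //; apply: measurable_ball.
  - by rewrite inE; apply: measurable_ball.
rewrite sumEFin lee_fin.
have -> : \sum_(n < N) 2^-1 ^+ n * (n.+1%:R / K *+ 2) =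
    2 / K * \sum_(n < N) n.+1%:R * 2^-1 ^+ n :> R.
  by rewrite mulr_sumr; apply: eq_bigr => n _; rewrite -mulr_natr; field; rewrite gt_eqF.
rewrite [8 / K](_ : _ = 2 / K * 4); last by field; rewrite gt_eqF.
by apply: ler_wpM2l; [rewrite divr_ge0 // ltW | apply: sum_succ_mul_halfpow_le].
Qed.

End staircase.

Section integral_bounds.
Context {d1 d2 : measure_display} {T1 : measurableType d1}
  {T2 : measurableType d2} {R : realType}.

Lemma ge0_integral_le_cst (m : {measure set T1 -> \bar R}) (A : set T1)
    (f : T1 -> R) (c : R) :
  measurable A -> measurable_fun A f ->
  (forall x, A x -> 0 <= f x <= c) ->
  (\int[m]_(x in A) (f x)%:E <= c%:E * m A)%E.
Proof.
move=> mA mf fc; rewrite -integral_cst //.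
apply: ge0_le_integral => //.
- by move=> x Ax; rewrite lee_fin; case/andP: (fc x Ax).
- exact/measurable_EFinP.
- by move=> x Ax; rewrite lee_fin; case/andP: (fc x Ax).
Qed.

Lemma ge0_integral_setX_le (m1 : {sigma_finite_measure set T1 -> \bar R})
    (m2 : {sigma_finite_measure set T2 -> \bar R}) (A : set T1) (B : set T2)
    (f : T1 * T2 -> R) (b : T1 -> R) :
  measurable A -> measurable B -> measurable_fun [set: T1 * T2] f ->
  (forall p, 0 <= f p) -> measurable_fun A b ->
  (forall x, A x -> (\int[m2]_(y in B) (f (x, y))%:E <= (b x)%:E)%E) ->
  (\int[m1 \x m2]_(p in A `*` B) (f p)%:E <= \int[m1]_(x in A) (b x)%:E)%E.
Proof.
move=> mA mB mf f0 mb fb.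
rewrite integral_mkcond [leRHS]integral_mkcond.
set g := (fun p => (f p)%:E) \_ (A `*` B).
have mg : measurable_fun [set: T1 * T2] g.
  apply/(measurable_restrictT _ (measurableX mA mB)).
  have mEf : measurable_fun [set: T1 * T2] (fun p => (f p)%:E).
    exact/measurable_EFinP.
  exact: measurable_funS mEf.
have g0 p : (0 <= g p)%E by rewrite /g patchE; case: ifP; rewrite ?lee_fin.
rewrite (fubini_tonelli1 _ mg g0).
apply: ge0_le_integral => //.
- by move=> x _; apply: integral_ge0.
- exact: measurable_fun_fubini_tonelli_F.
- by apply/(measurable_restrictT _ mA); apply/measurable_EFinP.
move=> x _; rewrite /fubini_F patchE; case: ifPn => [xA|xNA].
  rewrite (_ : (fun y => g (x, y)) = (fun y => (f (x, y))%:E) \_ B).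
    by rewrite -integral_mkcond fb // -inE.
  by apply/funext => y; rewrite /g !patchE in_setX xA.
rewrite integral0_eq // => y _.
by rewrite /g patchE in_setX (negbTE xNA).
Qed.

End integral_bounds.

Section green_integrals.
Context {R : realType}.
Local Notation T := (measurableTypeR R).
Local Notation mu := (@lebesgue_measure R).

Lemma measurable_sinh : measurable_fun [set: T] (@sinh R).
Proof.
apply: (measurable_funM (f := fun x : T => expR x - expR (- x))) => //.
apply: measurable_funB; first exact: measurable_expR.
by apply: measurableT_comp; [exact: measurable_expR | exact: measurable_funN].
Qed.

Lemma measurable_green_sinh K (u v : T * T -> R) :
  measurable_fun [set: T * T] u -> measurable_fun [set: T * T] v ->
  measurable_fun [set: T * T] (fun p => green_sinh K (u p) (v p)).
Proof.
move=> mU mV; apply: measurable_funM; first apply: measurable_funM => //.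
  by apply: measurableT_comp measurable_sinh _; apply: measurable_funM.
apply: measurableT_comp measurable_sinh _; apply: measurable_funM => //.
exact: measurable_funB.
Qed.

Lemma measurable_Gk (k : R * R) :
  measurable_fun [set: T * T] (fun p : T * T => Gk k p.1 p.2).
Proof.
have mfst : measurable_fun [set: T * T] fst := @measurable_fst _ _ T T.
have msnd : measurable_fun [set: T * T] snd := @measurable_snd _ _ T T.
have [->|hk] := eqVneq k (0, 0).
  rewrite /Gk eqxx; apply: measurable_fun_ifT; first exact: measurable_fun_ler.
  + by apply: measurable_funM => //; apply: measurable_funB.
  + by apply: measurable_funM => //; apply: measurable_funB.
under eq_fun do rewrite GkE //.
apply: measurable_fun_ifT; first exact: measurable_fun_ler.
+ exact: measurable_green_sinh.
+ exact: measurable_green_sinh.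
Qed.

Lemma measurable_normGk (k : R * R) :
  measurable_fun [set: T * T] (fun p : T * T => `|Gk k p.1 p.2|).
Proof. exact: measurableT_comp (@normr_measurable _ _) (measurable_Gk k). Qed.

Lemma fin_num_lebesgue_sub01 (A : set T) :
  measurable A -> A `<=` `[0, 1] -> mu A \is a fin_num.
Proof.
move=> mA A01; rewrite ge0_fin_numE // (le_lt_trans _ (ltry 1)) //.
apply: (@le_trans _ _ (mu `[0%R, 1%R]%classic)).
  by apply: le_measure; rewrite ?inE.
by rewrite lebesgue_measure_itv /= lte_fin ltr01 -EFinB subr0.
Qed.

Section subset_of_unit_interval.
Variables (A : set T) (mA : measurable A) (A01 : A `<=` `[0, 1]).
Local Notation a := (fine (mu A)).
Implicit Types (k : R * R) (x : R).

Let muA : mu A = a%:E.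
Proof. by rewrite fineK // fin_num_lebesgue_sub01. Qed.

Let in01 x : A x -> 0 <= x <= 1.
Proof. by move/A01; rewrite /= in_itv. Qed.

Let a_ge0 : 0 <= a.
Proof. exact: fine_ge0 (measure_ge0 _ _). Qed.

Let min_dist_ge0 x : A x -> 0 <= Num.min x (1 - x).
Proof. by move/in01/andP => [? ?]; rewrite le_min; apply/andP; split; lra. Qed.

Let normGkE k x y : 0 <= x <= 1 -> A y -> `|Gk k x y| = Gk k x y.
Proof. by move=> x01 Ay; rewrite ger0_norm //; apply: Gk_ge0 => //; apply: in01. Qed.

Let measurable_normGk_section k x : measurable_fun A (fun y : T => `|Gk k x y|).
Proof.
exact: measurable_funS (measurable_fun_pair2 x (measurable_normGk k)).
Qed.

Lemma integral_normGk_le_measure k x : k != (0, 0) -> 0 <= x <= 1 ->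
  (\int[mu]_(y in A) (`|Gk k x y|)%:E <= (a / (2 * knorm k))%:E)%E.
Proof.
move=> hk x01; have K0 := knorm_gt0 hk.
rewrite mulrC EFinM -muA; apply: ge0_integral_le_cst => // y Ay.
rewrite normr_ge0 normGkE //=.
apply: (le_trans (Gk_le_expR hk x01 (in01 Ay))).
rewrite ler_pdivrMr ?mulr_gt0 // mulVf ?gt_eqF ?mulr_gt0 //.
rewrite -expR0 ler_expR oppr_le0.
exact: mulr_ge0 (ltW K0) (normr_ge0 _).
Qed.

Lemma integral_normGk_le_inv_sqr k x : k != (0, 0) -> 0 <= x <= 1 ->
  (\int[mu]_(y in A) (`|Gk k x y|)%:E <= (4 / knorm k ^+ 2)%:E)%E.
Proof.
move=> hk x01; have K0 := knorm_gt0 hk; set K := knorm k in K0 *.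
set N := (Num.truncn K).+1.
have c0 : 0 <= (2 * K)^-1 by rewrite invr_ge0 mulr_ge0 ?ltW.
have mstair : measurable_fun A (fun y : T => staircase K N x y).
  exact: measurable_funS (measurable_staircase K N x).
apply: (@le_trans _ _ (\int[mu]_(y in A) ((2 * K)^-1 * staircase K N x y)%:E)%E).
  apply: ge0_le_integral => //.
  - by apply/measurable_EFinP; apply: measurable_normGk_section.
  - by apply/measurable_EFinP; apply: measurable_funM.
  move=> y Ay; rewrite lee_fin normGkE //.
  apply: (le_trans (Gk_le_expR hk x01 (in01 Ay))); rewrite -/K.
  rewrite mulrC ler_wpM2l // expR_le_staircase //.
  have d1 : `|x - y| <= 1.
    by case/andP: x01 (in01 Ay) => ? ? /andP[? ?]; apply/ler_normlP; split; lra.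
  apply: (@le_lt_trans _ _ K); first exact: ler_piMr (ltW K0) d1.
  exact: Num.Theory.truncnS_gt.
under eq_integral do rewrite EFinM.
rewrite ge0_integralZl_EFin //; last 2 first.
- by move=> y _; rewrite lee_fin staircase_ge0.
- exact/measurable_EFinP.
apply: (le_trans (lee_wpmul2l _ (integral_staircase_le N x mA K0))).
  by rewrite lee_fin.
by rewrite -EFinM lee_fin le_eqVlt; apply/orP; left; apply/eqP; field; rewrite gt_eqF.
Qed.

Lemma integral_normGk0_le x : 0 <= x <= 1 ->
  (\int[mu]_(y in A) (`|Gk (0, 0) x y|)%:E <= (a * Num.min x (1 - x))%:E)%E.
Proof.
move=> x01; rewrite mulrC EFinM -muA; apply: ge0_integral_le_cst => // y Ay.
by rewrite normr_ge0 normGkE //= Gk0_le_min // in01.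
Qed.

Lemma integral_normGk_setX_le k : k != (0, 0) ->
  (\int[(mu \x mu)%E]_(p in A `*` A) (`|Gk k p.1 p.2|)%:E <=
   (4 * a / knorm k * Num.min a (knorm k)^-1)%:E)%E.
Proof.
move=> hk; have K0 := knorm_gt0 hk; set K := knorm k in K0 *.
set b := Num.min (a / (2 * K)) (4 / K ^+ 2).
have inner x : A x -> (\int[mu]_(y in A) (`|Gk k x y|)%:E <= b%:E)%E.
  move=> Ax; rewrite /b EFin_min le_min.
  by rewrite integral_normGk_le_measure ?integral_normGk_le_inv_sqr ?in01.
apply: (le_trans (ge0_integral_setX_le mu mA mA (measurable_normGk k)
  (fun=> normr_ge0 _) (measurable_cst b) inner)).
have -> : (\int[mu]_(x in A) b%:E = b%:E * mu A)%E by exact: integral_cst.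
rewrite {1}muA -EFinM lee_fin.
have b_le : b <= 4 / K * Num.min a K^-1.
  rewrite /b minr_pMr; last by rewrite divr_ge0 // ltW.
  apply: le_min2.
    rewrite [4 / K * a](_ : _ = 8 * a / (2 * K)); last by field; rewrite gt_eqF.
    by rewrite ler_pM2r ?invr_gt0 ?mulr_gt0 //; have := a_ge0; lra.
  by rewrite expr2 invfM mulrA.
rewrite [leRHS](_ : _ = 4 / K * Num.min a K^-1 * a); last by ring.
by apply: ler_wpM2r => //; apply: a_ge0.
Qed.

Lemma integral_min_dist_ge0 : (0 <= \int[mu]_(x in A) (Num.min x (1 - x))%:E)%E.
Proof.
by apply: integral_ge0 => x Ax; rewrite lee_fin min_dist_ge0.
Qed.

Lemma integral_normGk0_setX_le :
  (\int[(mu \x mu)%E]_(p in A `*` A) (`|Gk (0, 0) p.1 p.2|)%:E <=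
   a%:E * \int[mu]_(x in A) (Num.min x (1 - x))%:E)%E.
Proof.
have mmin : measurable_fun [set: T] (fun x : T => Num.min x (1 - x)).
  apply: measurable_minr; first exact: measurable_id.
  by apply: measurable_funB => //; exact: measurable_id.
have inner x : A x ->
    (\int[mu]_(y in A) (`|Gk (0, 0) x y|)%:E <= (a * Num.min x (1 - x))%:E)%E.
  by move=> Ax; rewrite integral_normGk0_le ?in01.
have mb : measurable_fun A (fun x : T => a * Num.min x (1 - x)).
  exact: measurable_funS (measurable_funM (measurable_cst a) mmin).
apply: (le_trans (ge0_integral_setX_le mu mA mA (measurable_normGk (0, 0))
  (fun=> normr_ge0 _) mb inner)).
under eq_integral do rewrite EFinM.
rewrite ge0_integralZl_EFin //.
by apply/measurable_EFinP; apply: measurable_funS mmin.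
Qed.

End subset_of_unit_interval.

End green_integrals.

Theorem lemma3p3 (R : realType) :
  exists C : R,
  forall A : set (measurableTypeR R),
    measurable A -> A `<=` `[0%R, 1%R] ->
    let mu := (@lebesgue_measure R) in
    let a := fine (mu A) in
    (forall k : R * R, k != (0, 0) ->
       (\int[(mu \x mu)%E]_(p in A `*` A) (`|Gk k p.1 p.2|)%:E <=
        (C * a / knorm k * Num.min a (knorm k)^-1)%:E)%E) /\
    (\int[(mu \x mu)%E]_(p in A `*` A) (`|Gk (0, 0) p.1 p.2|)%:E <=
       (C * a ^+ 2 * a^-1)%:E * \int[mu]_(z in A) (Num.min z (1 - z))%:E)%E.
Proof.
exists 4 => A mA A01 mu a; split.
  by move=> k hk; apply: integral_normGk_setX_le.
apply: (le_trans (integral_normGk0_setX_le mA A01)).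
apply: lee_wpmul2r; first exact: integral_min_dist_ge0.
have a0 : 0 <= a by apply: fine_ge0; apply: measure_ge0.
rewrite lee_fin; change (a <= 4 * a ^+ 2 / a).
have [->|an0] := eqVneq a 0; first by rewrite expr0n /= mulr0 mul0r.
by rewrite expr2 mulrA mulfK //; lra.
Qed.
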